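(* Let $\Sigma$ be the discrete-time LTI system $x_{k+1}=Ax_k+Bu_k$, $y_k=Cx_k+Du_k$ with $A\in\mathbb{R}^{n_x\times n_x}$, $B\in\mathbb{R}^{n_x\times n_u}$, $C\in\mathbb{R}^{n_y\times n_x}$, $D\in\mathbb{R}^{n_y\times n_u}$ and $(A,B)$ controllable. Let $Q,M,L\in\mathbb{N}_{\geqslant 1}$, let $\bm{\omega}=(\omega_0,\dots,\omega_{M-1})$ with $\omega_m\in[0,\pi)$, and let $\{U^{i}(\omega),X^{i}(\omega),Y^{i}(\omega)\}$, $i\in\{1,\dots,Q\}$, be $Q$ input-state-output spectra of $\Sigma$. Define the samples $U^{i}_m=U^{i}(\omega_m)$, $X^{i}_m=X^{i}(\omega_m)$, $Y^{i}_m=Y^{i}(\omega_m)$ for $m\in\{0,\dots,M-1\}$, and the sequences $\bm{U}^i=(U^i_0,\dots,U^i_{M-1})$, $\bm{X}^i=(X^i_0,\dots,X^i_{M-1})$. Suppose that $\bm{U}^{i}$, $i\in\{1,\dots,Q\}$, are collectively persistently exciting (CPE) of order $L+n_x$. Then the complex matrix $$\begin{bmatrix} F_1(\bm{X}^{1},\bm{\omega}) & \cdots & F_1(\bm{X}^{Q},\bm{\omega}) & F_1^*(\bm{X}^{1},\bm{\omega}) & \cdots & F_1^*(\bm{X}^{Q},\bm{\omega})\\ F_L(\bm{U}^{1},\bm{\omega}) & \cdots & F_L(\bm{U}^{Q},\bm{\omega}) & F_L^*(\bm{U}^{1},\bm{\omega}) & \cdots & F_L^*(\bm{U}^{Q},\bm{\omega})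 \end{bmatrix}$$ has full row rank $n_x+Ln_u$; equivalently, the real matrix $$\Lambda=\operatorname{Re}\left(\begin{bmatrix} F_1(\bm{X}^{1},\bm{\omega}) & \cdots & F_1(\bm{X}^{Q},\bm{\omega})\\ F_L(\bm{U}^{1},\bm{\omega}) & \cdots & F_L(\bm{U}^{Q},\bm{\omega}) \end{bmatrix}\begin{bmatrix} F_1(\bm{X}^{1},\bm{\omega}) & \cdots & F_1(\bm{X}^{Q},\bm{\omega})\\ F_L(\bm{U}^{1},\bm{\omega}) & \cdots & F_L(\bm{U}^{Q},\bm{\omega}) \end{bmatrix}^{\mathsf{H}}\right)$$ is positive definite.
   Context: $j=\sqrt{-1}$; $^*$ denotes entrywise complex conjugation and $^{\mathsf{H}}$ conjugate transpose; $\otimes$ is the Kronecker product. $\mathbb{W}=[-\pi,\pi)$. Spectra: a spectrum is a function $V:\mathbb{W}\to\mathbb{C}^{n}$ satisfying the symmetry $V(\omega)=V^*(-\omega)$ for all $\omega\in\mathbb{W}$. A triple of spectra $\{U(\omega),X(\omega),Y(\omega)\}$ (with values in $\mathbb{C}^{n_u},\mathbb{C}^{n_x},\mathbb{C}^{n_y}$, each symmetric) is an input-state-output spectrum of $\Sigma$ if for all $\omega\in\mathbb{W}$: $e^{j\omega}X(\omega)=AX(\omega)+BU(\omega)$ and $Y(\omega)=CX(\omega)+DU(\omega)$. A pair $\{U(\omega),Y(\omega)\}$ of symmetric spectra is an input-output spectrum of $\Sigma$ if there is a symmetric spectrum $X(\omega)$ making $\{U,X,Y\}$ an input-state-output spectrum.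 For $L\geqslant 1$ and $\omega\in\mathbb{R}$, $W_L(\omega)=\begin{bmatrix}1 & e^{j\omega} & \cdots & e^{j\omega(L-1)}\end{bmatrix}^\top\in\mathbb{C}^{L}$. For a sequence $\bm{V}=(V_0,\dots,V_{M-1})$ with $V_m\in\mathbb{C}^{n_v}$ and frequencies $\bm{\omega}=(\omega_0,\dots,\omega_{M-1})$, $F_L(\bm{V},\bm{\omega})=\begin{bmatrix}W_L(\omega_0)\otimes V_0 & \cdots & W_L(\omega_{M-1})\otimes V_{M-1}\end{bmatrix}\in\mathbb{C}^{n_vL\times M}$. Frequency-domain CPE: sequences $\bm{V}^i\in(\mathbb{C}^{n_v})^M$, $i=1,\dots,Q$, consisting of samples $V^i_m=V^i(\omega_m)$ of symmetric spectra $V^i$ at frequencies $\omega_m\in[0,\pi)$, are called collectively persistently exciting of order $L$ if the matrix $\begin{bmatrix}F_L(\bm{V}^{1},\bm{\omega}) & \cdots & F_L(\bm{V}^{Q},\bm{\omega}) & F_L^*(\bm{V}^{1},\bm{\omega}) & \cdots & F_L^*(\bm{V}^{Q},\bm{\omega})\end{bmatrix}$ has full row rank $n_vL$ (equivalently, $\operatorname{Re}\sum_{m}W_L(\omega_m)W_L(\omega_m)^{\mathsf{H}}\otimes\sum_i V^i_m(V^i_m)^{\mathsf{H}}\succ 0$). *)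

From HB Require Import structures.
From mathcomp Require Import all_boot all_order all_algebra.
From mathcomp Require Import complex mxtens.
From mathcomp Require Import reals trigo.

Set Implicit Arguments.
Unset Strict Implicit.
Unset Printing Implicit Defensive.

Import Order.TTheory GRing.Theory Num.Theory.
Local Open Scope ring_scope.

Section Defs.
Variable R : realType.
Local Notation C := R[i].

Definition expj (w : R) : C := Complex (cos w) (sin w).

Definition cmx m n (A : 'M[R]_(m, n)) : 'M[C]_(m, n) := map_mx (fun r => r%:C%C) A.

Definition mxconj m n (A : 'M[C]_(m, n)) : 'M[C]_(m, n) := map_mx (@conjc R) A.

Definition Remx m n (A : 'M[C]_(m, n)) : 'M[R]_(m, n) := map_mx (@complex.Re R) A.

Definition ctrmx m n (A : 'M[C]_(m, n)) : 'M[C]_(n, m) := (mxconj A)^T.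

Definition inW (w : R) : Prop := - pi <= w /\ w < pi.

(* a spectrum V : W -> C^n with V(w) = V^*(-w); spectra are represented as
   functions on R whose values outside W are irrelevant *)
Definition symmetric_spectrum n (V : R -> 'cV[C]_n) : Prop :=
  forall w, inW w -> inW (- w) -> V w = mxconj (V (- w)).

Definition isos_spectrum nx nu ny
  (A : 'M[R]_(nx, nx)) (B : 'M[R]_(nx, nu)) (Cm : 'M[R]_(ny, nx)) (D : 'M[R]_(ny, nu))
  (U : R -> 'cV[C]_nu) (X : R -> 'cV[C]_nx) (Y : R -> 'cV[C]_ny) : Prop :=
  [/\ symmetric_spectrum U, symmetric_spectrum X, symmetric_spectrum Y &
      forall w, inW w ->
        expj w *: X w = cmx A *m X w + cmx B *m U w /\
        Y w = cmx Cm *m X w + cmx D *m U w].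

Definition ctrb_mx nx nu (A : 'M[R]_(nx, nx)) (B : 'M[R]_(nx, nu)) :=
  \mxrow_(k < nx) (A ^+ k *m B).

Definition controllable nx nu (A : 'M[R]_(nx, nx)) (B : 'M[R]_(nx, nu)) : Prop :=
  \rank (ctrb_mx A B) = nx.

Definition WL (L : nat) (w : R) : 'cV[C]_L := \col_(l < L) expj (w * l%:R).

Definition FL (L nv M : nat) (V : 'I_M -> 'cV[C]_nv) (om : 'I_M -> R)
  : 'M[C]_(L * nv, M) :=
  \matrix_(r, m) (WL L (om m) *t V m) r ord0.

Definition FLblk (L nv M Q : nat) (V : 'I_Q -> 'I_M -> 'cV[C]_nv) (om : 'I_M -> R) :=
  \mxrow_(i < Q) FL L (V i) om.

Definition CPE (L nv M Q : nat) (V : 'I_Q -> 'I_M -> 'cV[C]_nv) (om : 'I_M -> R) : Prop :=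
  \rank (row_mx (FLblk L V om) (mxconj (FLblk L V om))) = (nv * L)%N.

Definition posdef n (P : 'M[R]_n) : Prop :=
  P^T = P /\ forall x : 'cV[R]_n, x != 0 -> 0 < (x^T *m P *m x) ord0 ord0.

End Defs.

From HB Require Import structures.
From mathcomp Require Import all_boot all_order all_algebra.
From mathcomp Require Import complex mxtens.
From mathcomp Require Import reals trigo.
From mathcomp Require Import zify ring.

Set Implicit Arguments.
Unset Strict Implicit.
Unset Printing Implicit Defensive.

Import Order.TTheory GRing.Theory Num.Theory.
Local Open Scope ring_scope.

(* A left-kernel vector (xi, eta_0, ..., eta_(L-1)) of [G, conj G] gives, at every
   sample (z, x, u) = (e^(j w_m), X^i_m, U^i_m) and at its conjugate, the relation
   xi x + sum_l z^l eta_l u = 0.  Multiplying by z^j and using z x = A x + B u moves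
   the state term into input terms; combining these relations for j = 0..nx with the
   coefficients of the characteristic polynomial of A (Cayley-Hamilton) yields a
   relation of order L + nx in the input samples alone, which CPE forces to vanish.
   Reading off its coefficients from the top kills eta; then xi A^k B = 0 for all k,
   so xi = 0 by controllability.  Positive definiteness follows because for real x,
   x^T Re(G G^H) x = |x^T G|^2, and x^T G = 0 implies x^T conj(G) = 0. *)

Section SampleAnnihilators.
Variable F : fieldType.

Definition dot n (r : 'rV[F]_n) (c : 'cV[F]_n) : F := (r *m c) 0 0.

Lemma dotDl n (r1 r2 : 'rV[F]_n) c : dot (r1 + r2) c = dot r1 c + dot r2 c.
Proof. by rewrite /dot mulmxDl mxE. Qed.

Lemma dotDr n (r : 'rV[F]_n) c1 c2 : dot r (c1 + c2) = dot r c1 + dot r c2.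
Proof. by rewrite /dot mulmxDr mxE. Qed.

Lemma dotZl n a (r : 'rV[F]_n) c : dot (a *: r) c = a * dot r c.
Proof. by rewrite /dot -scalemxAl mxE. Qed.

Lemma dotZr n a (r : 'rV[F]_n) c : dot r (a *: c) = a * dot r c.
Proof. by rewrite /dot -scalemxAr mxE. Qed.

Lemma dot0l n (c : 'cV[F]_n) : dot 0 c = 0.
Proof. by rewrite /dot mul0mx mxE. Qed.

Lemma dotA n m (r : 'rV[F]_n) (M : 'M[F]_(n, m)) c : dot (r *m M) c = dot r (M *m c).
Proof. by rewrite /dot mulmxA. Qed.

Lemma dot_suml n I (s : seq I) P (f : I -> 'rV[F]_n) c :
  dot (\sum_(i <- s | P i) f i) c = \sum_(i <- s | P i) dot (f i) c.
Proof. by elim/big_rec2: _ => [|i x y _ <-]; rewrite ?dot0l ?dotDl. Qed.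

Lemma monic_annihilating_combination n (A : 'M[F]_n) :
  exists al : nat -> F, al n = 1 /\ \sum_(0 <= j < n.+1) al j *: A ^+ j = 0.
Proof.
case: n A => [|n] A.
  by exists (fun _ => 1); split=> //; apply/matrixP => [[]].
exists (fun j => (char_poly A)`_j); split.
  by have := char_poly_monic A; rewrite monicE lead_coefE size_char_poly => /eqP.
have := Cayley_Hamilton A; rewrite /horner_mx /horner_morph.
rewrite (@horner_coef_wide _ n.+2) ?size_map_poly ?size_char_poly // => CH.
rewrite -[RHS]CH big_mkord; apply: eq_bigr => i _.
by rewrite coef_map /= -mul_scalar_mx.
Qed.

Variables (nx nu : nat) (A : 'M[F]_nx) (B : 'M[F]_(nx, nu)).
Variable sample : F -> 'cV[F]_nx -> 'cV[F]_nu -> Prop.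
Hypothesis sample_state : forall z x u, sample z x u -> z *: x = A *m x + B *m u.

(* The pairing of the coefficient rows [e 0, ..., e (K-1)] with W_K(z) (x) u. *)
Definition wpair K (e : nat -> 'rV[F]_nu) z u := \sum_(0 <= p < K) z ^+ p * dot (e p) u.

Definition exciting N := forall e : nat -> 'rV[F]_nu,
  (forall z x u, sample z x u -> wpair N e z u = 0) -> forall p, (p < N)%N -> e p = 0.

Lemma dot_state_shift z x u (xi : 'rV[F]_nx) j : sample z x u ->
  z ^+ j * dot xi x = dot (xi *m A ^+ j) x +
     \sum_(0 <= i < j) z ^+ i * dot (xi *m A ^+ (j - i.+1) *m B) u.
Proof.
move=> /sample_state Hzx; elim: j xi => [|j IH] xi.
  by rewrite expr0 mul1r big_geq // addr0 mulmx1.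
rewrite exprSr -mulrA -dotZr Hzx dotDr -dotA -dotA.
rewrite mulrDr IH big_nat_recr //= subSS subnn expr0 mulmx1 -addrA; congr (_ + _).
  by rewrite exprS mulmxA.
congr (_ + _); apply: eq_big_nat => i /andP[_ lij].
by rewrite subSS -(subnSK lij) exprS !mulmxA.
Qed.

Section Annihilator.
Variables (N L : nat) (xi : 'rV[F]_nx) (eta : nat -> 'rV[F]_nu).
Hypothesis eta_supp : forall l, (L <= l)%N -> eta l = 0.
Hypothesis annihilates : forall z x u, sample z x u -> dot xi x + wpair L eta z u = 0.

(* The relation [annihilates] multiplied by [z ^+ j], with the state term moved
   into input terms by [dot_state_shift]. *)
Definition shifted_coef j p :=
  if (j <= p)%N then eta (p - j) else xi *m A ^+ (j - p.+1) *m B.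

Lemma wpair_shifted_coef j z x u : (L + j <= N)%N -> sample z x u ->
  wpair N (shifted_coef j) z u = - dot (xi *m A ^+ j) x.
Proof.
move=> hj hs; rewrite /wpair (@big_cat_nat _ _ _ j) //=; last by lia.
rewrite (@eq_big_nat _ _ _ 0 j _ (fun p => z ^+ p * dot (xi *m A ^+ (j - p.+1) *m B) u));
  last by move=> p /andP[_ hp]; rewrite /shifted_coef ifF //; lia.
rewrite -[X in \sum_(X <= _ < N) _](add0n j) big_addn.
rewrite (@eq_big_nat _ _ _ 0 (N - j) _ (fun p => z ^+ j * (z ^+ p * dot (eta p) u)));
  last by move=> p _; rewrite /shifted_coef ifT ?addnK ?exprD 1?mulrCA ?mulrA //; lia.
rewrite -mulr_sumr [\sum_(0 <= i < N - j) _](@big_cat_nat _ _ _ L) //=; last by lia.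
rewrite [X in _ + _ * (_ + X)]big_nat_cond [X in _ + _ * (_ + X)]big1 ?addr0; last first.
  by move=> p /andP[/andP[hp _] _]; rewrite eta_supp ?dot0l ?mulr0.
have := dot_state_shift xi j hs => /(congr1 (fun t => t - dot (xi *m A ^+ j) x)).
rewrite addrAC subrr add0r => <-.
have := annihilates hs => /(congr1 (fun t => z ^+ j * t)).
by rewrite mulr0 mulrDr /wpair => H; rewrite addrAC H add0r.
Qed.

Hypothesis excN : exciting N.
Hypothesis orderN : (L + nx <= N)%N.

Lemma annihilator_input_eq0 : forall l, eta l = 0.
Proof.
have [al [al1 alA]] := monic_annihilating_combination A.
pose c p := \sum_(0 <= j < nx.+1) al j *: shifted_coef j p.
have c0 p : (p < N)%N -> c p = 0.
  apply: excN p => z x u hs; rewrite /wpair.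
  under eq_bigr do rewrite /c dot_suml mulr_sumr.
  rewrite exchange_big /= (@eq_big_nat _ _ _ 0 nx.+1 _
    (fun j => - dot (al j *: (xi *m A ^+ j)) x)); last first.
    move=> j /andP[_ hj]; rewrite dotZl -mulrN -(wpair_shifted_coef _ hs); last by lia.
    by rewrite /wpair mulr_sumr; apply: eq_bigr => p _; rewrite dotZl mulrCA.
  rewrite sumrN -dot_suml; under eq_bigr do rewrite scalemxAr.
  by rewrite -mulmx_sumr alA mulmx0 dot0l oppr0.
(* The leading term of [c (nx + d)] is [eta d]; the others involve [eta] above [d]. *)
have top d : (d < L)%N -> (forall l, (d < l)%N -> eta l = 0) -> eta d = 0.
  move=> hd hgt; have := c0 (nx + d)%N; rewrite /c big_nat_recr //= /shifted_coef.
  rewrite leq_addr addKn al1 scale1r big_nat_cond big1 ?add0r; first by apply; lia.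
  by move=> j /andP[/andP[_ hj] _]; rewrite ifT ?hgt ?scaler0 //; lia.
have down k : forall l, (L - k <= l)%N -> eta l = 0.
  elim: k => [|k IH] l hl; first by apply: eta_supp; rewrite subn0 in hl.
  have [/IH //|hlt] := leqP (L - k) l.
  by apply: top => [|l' hl']; [lia | apply: IH; lia].
by move=> l; apply: (down L); lia.
Qed.

End Annihilator.

Lemma annihilator_state_step N (xi : 'rV[F]_nx) : exciting N -> (1 + nx <= N)%N ->
  (forall z x u, sample z x u -> dot xi x = 0) ->
  xi *m B = 0 /\ (forall z x u, sample z x u -> dot (xi *m A) x = 0).
Proof.
move=> excN hN hx.
have shift z x u : sample z x u -> dot (xi *m A) x + dot (xi *m B) u = 0.
  move=> hs; have := hx _ _ _ hs => /(congr1 (fun t => z * t)).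
  by rewrite mulr0 -dotZr (sample_state hs) dotDr -!dotA.
pose eta l := if l == 0%N then xi *m B else 0.
have xiB0 : xi *m B = 0.
  apply: (@annihilator_input_eq0 N 1 (xi *m A) eta _ _ excN hN 0) => [[]//|z x u hs].
  by rewrite /wpair big_nat1 expr0 mul1r (shift _ _ _ hs).
by split=> // z x u /shift; rewrite xiB0 dot0l addr0.
Qed.

Lemma annihilator_state_ctrb N (xi : 'rV[F]_nx) : exciting N -> (1 + nx <= N)%N ->
  (forall z x u, sample z x u -> dot xi x = 0) -> forall k, xi *m A ^+ k *m B = 0.
Proof.
move=> excN hN hx k; elim: k xi hx => [|k IH] xi hx.
  by rewrite expr0 mulmx1; case: (annihilator_state_step excN hN hx).
by rewrite exprS mulmxA; apply: IH; case: (annihilator_state_step excN hN hx).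
Qed.

End SampleAnnihilators.

Section TensorBlocks.
Variable F : fieldType.

(* The [l]-th length-[n] block of a row vector indexed like [W_N (x) V]; zero for [l >= N]. *)
Definition tens_block N n (v : 'rV[F]_(N * n)) (l : nat) : 'rV[F]_n :=
  if insub l is Some o then \row_k v 0 (mxtens_index (o, k)) else 0.

Lemma tens_blockE N n (v : 'rV[F]_(N * n)) (o : 'I_N) :
  tens_block v o = \row_k v 0 (mxtens_index (o, k)).
Proof. by rewrite /tens_block valK. Qed.

Lemma tens_block_out N n (v : 'rV[F]_(N * n)) l : (N <= l)%N -> tens_block v l = 0.
Proof. by move=> h; rewrite /tens_block insubN // -leqNgt. Qed.

Lemma tens_block0 N n l : tens_block (0 : 'rV[F]_(N * n)) l = 0.
Proof. by rewrite /tens_block; case: insub => // o; apply/rowP => k; rewrite !mxE. Qed.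

Lemma tens_block_eq0 N n (v : 'rV[F]_(N * n)) : (forall l, tens_block v l = 0) -> v = 0.
Proof.
move=> H; apply/matrixP => a r; rewrite (ord1 a); case: (mxtens_indexP r) => o k.
by have := congr1 (fun M : 'rV_n => M 0 k) (H o); rewrite tens_blockE !mxE.
Qed.

Lemma sum_mxtens_index N n (f : 'I_(N * n) -> F) :
  \sum_r f r = \sum_(l < N) \sum_(k < n) f (mxtens_index (l, k)).
Proof.
rewrite pair_big (reindex (@mxtens_index N n)) /=; first by apply: eq_bigr => -[].
by exists (@mxtens_unindex N n) => x _; rewrite ?mxtens_indexK ?mxtens_unindexK.
Qed.

End TensorBlocks.

Lemma map_mxrow (T U : Type) (f : T -> U) m q (q_ : 'I_q -> nat)
    (B_ : forall j, 'M[T]_(m, q_ j)) :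
  map_mx f (\mxrow_j B_ j) = \mxrow_j map_mx f (B_ j).
Proof. by apply/matrixP => i k; rewrite !mxE. Qed.

Section ComplexMatrices.
Variable R : realType.
Local Notation C := R[i].

Lemma expjD (a b : R) : expj (a + b) = expj a * expj b.
Proof. by rewrite /expj cosD sinD; simpc; congr Complex; ring. Qed.

Lemma expjMn (w : R) l : expj (w * l%:R) = expj w ^+ l.
Proof.
elim: l => [|l IH]; first by rewrite mulr0 /expj cos0 sin0 expr0.
by rewrite mulrS mulrDr mulr1 expjD IH exprS.
Qed.

Lemma mxconj_cmx m n (M : 'M[R]_(m, n)) : mxconj (cmx M) = cmx M.
Proof. by apply/matrixP => i j; rewrite !mxE conjc_real. Qed.

Lemma mxconjM m n p (M1 : 'M[C]_(m, n)) (M2 : 'M[C]_(n, p)) :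
  mxconj (M1 *m M2) = mxconj M1 *m mxconj M2.
Proof. exact: map_mxM. Qed.

Lemma mxconj_tr m n (M : 'M[C]_(m, n)) : mxconj M^T = (mxconj M)^T.
Proof. by apply/matrixP => i j; rewrite !mxE. Qed.

Lemma cmxM m n p (M1 : 'M[R]_(m, n)) (M2 : 'M[R]_(n, p)) :
  cmx (M1 *m M2) = cmx M1 *m cmx M2.
Proof. exact: (map_mxM (real_complex R)). Qed.

Lemma cmxX n (M1 : 'M[R]_n) k : cmx (M1 ^+ k) = cmx M1 ^+ k.
Proof.
elim: k => [|k IH]; first by apply/matrixP => i j; rewrite !mxE; case: (i == j).
by rewrite !exprS -IH cmxM.
Qed.

Lemma ctrb_left_kernel nx nu (A : 'M[R]_nx) (B : 'M[R]_(nx, nu)) (xi : 'rV[C]_nx) :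
  controllable A B -> (forall k, xi *m cmx A ^+ k *m cmx B = 0) -> xi = 0.
Proof.
move=> hctrb hxi; have hfree : row_free (cmx (ctrb_mx A B)).
  by rewrite /row_free mxrank_map hctrb.
apply: (row_free_inj hfree); rewrite mul0mx /ctrb_mx /cmx map_mxrow mul_mxrow.
by apply/mxrowP => k; rewrite mxrowK submxrow0 -/(cmx _) cmxM cmxX mulmxA.
Qed.

Lemma mulmx_FL L nv M (V : 'I_M -> 'cV[C]_nv) om (v : 'rV[C]_(L * nv)) m :
  (v *m FL L V om) 0 m = wpair L (tens_block v) (expj (om m)) (V m).
Proof.
rewrite mxE sum_mxtens_index /wpair big_mkord; apply: eq_bigr => l _.
rewrite /dot mxE mulr_sumr; apply: eq_bigr => k _.
by rewrite tens_blockE !mxE !mxtens_indexK /= (ord1 (Ordinal _)) expjMn mulrCA.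
Qed.

Lemma mulmx_mxconj_FL L nv M (V : 'I_M -> 'cV[C]_nv) om (v : 'rV[C]_(L * nv)) m :
  (v *m mxconj (FL L V om)) 0 m =
  wpair L (tens_block v) (expj (om m))^*%C (mxconj (V m)).
Proof.
rewrite mxE sum_mxtens_index /wpair big_mkord; apply: eq_bigr => l _.
rewrite /dot mxE mulr_sumr; apply: eq_bigr => k _.
rewrite tens_blockE !mxE !mxtens_indexK /= (ord1 (Ordinal _)).
by rewrite expjMn rmorphM rmorphXn mulrCA.
Qed.

Lemma Re_sum I (r : seq I) (P : pred I) (f : I -> C) :
  complex.Re (\sum_(i <- r | P i) f i) = \sum_(i <- r | P i) complex.Re (f i).
Proof. by elim/big_rec2: _ => // i a b _ <-; case: (f i); case: b. Qed.

Lemma Re_conjC (z : C) : complex.Re z^*%C = complex.Re z.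
Proof. by case: z. Qed.

Lemma Re_mul_conjC (x : C) :
  complex.Re (x * x^*%C) = complex.Re x ^+ 2 + complex.Im x ^+ 2.
Proof. by case: x => [a b]; simpc => /=; ring. Qed.

Lemma sqr_Re_Im_gt0 (z : C) : z != 0 -> 0 < complex.Re z ^+ 2 + complex.Im z ^+ 2.
Proof.
case: z => a b hz /=; rewrite lt_neqAle addr_ge0 ?sqr_ge0 // andbT eq_sym.
rewrite paddr_eq0 ?sqr_ge0 // !sqrf_eq0.
by apply: contra hz => /andP[/eqP -> /eqP ->].
Qed.

Lemma Remx_quad n (x : 'cV[R]_n) (P : 'M[C]_n) :
  (x^T *m Remx P *m x) 0 0 = complex.Re (((cmx x)^T *m P *m cmx x) 0 0).
Proof.
rewrite !mxE [RHS](Re_sum (index_enum _)); apply: eq_bigr => j _.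
rewrite !mxE mulr_suml [in RHS]mulr_suml [RHS](Re_sum (index_enum _)).
by apply: eq_bigr => k _; rewrite !mxE; case: (P k j) => a b; simpc => /=; ring.
Qed.

Lemma Remx_gram_tr n m (G : 'M[C]_(n, m)) :
  (Remx (G *m ctrmx G))^T = Remx (G *m ctrmx G).
Proof.
apply/matrixP => a b; rewrite !mxE -[RHS]Re_conjC.
rewrite rmorph_sum; congr complex.Re; apply: eq_bigr => k _.
by rewrite !mxE rmorphM /= conjcK mulrC.
Qed.

(* For real [x], [x^T Re(G G^H) x = |x^T G|^2], and [x^T G = 0] conjugates to
   [x^T conj(G) = 0]. *)
Lemma Remx_gram_posdef n m (G : 'M[C]_(n, m)) :
  row_free (row_mx G (mxconj G)) -> posdef (Remx (G *m ctrmx G)).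
Proof.
move=> hfree; split=> [|x hx]; first exact: Remx_gram_tr.
pose y := (cmx x)^T *m G.
have hy : y != 0.
  apply: contraNneq hx => y0; apply/eqP/matrixP => i j.
  have cx0 : (cmx x)^T = 0.
    apply: (row_free_inj hfree); rewrite /= mul0mx mul_mx_row -/y y0 -row_mx0.
    have -> : (cmx x)^T = mxconj (cmx x)^T by rewrite mxconj_tr mxconj_cmx.
    by rewrite -mxconjM -/y y0 /mxconj map_mx0.
  by have := congr1 (fun M : 'rV_n => complex.Re (M 0 i)) cx0; rewrite (ord1 j) !mxE.
have -> : (x^T *m Remx (G *m ctrmx G) *m x) 0 0 =
    \sum_k (complex.Re (y 0 k) ^+ 2 + complex.Im (y 0 k) ^+ 2).
  rewrite Remx_quad; have -> : (cmx x)^T *m (G *m ctrmx G) *m cmx x = y *m ctrmx y.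
    by rewrite /ctrmx mxconjM trmx_mul mxconj_tr mxconj_cmx trmxK !mulmxA.
  by rewrite mxE Re_sum; apply: eq_bigr => k _; rewrite !mxE Re_mul_conjC.
have [k hk] : exists k, y 0 k != 0.
  apply/existsP; apply: contraNT hy => /existsPn hy0; apply/eqP/matrixP => a k.
  by rewrite (ord1 a) [RHS]mxE; apply/eqP/negbNE/hy0.
rewrite (bigD1 k) //=; apply: (lt_le_trans (sqr_Re_Im_gt0 hk)).
by rewrite lerDl; apply: sumr_ge0 => i _; rewrite addr_ge0 ?sqr_ge0.
Qed.

End ComplexMatrices.

Section FrequencySamples.
Variable R : realType.
Local Notation C := R[i].
Variables (nx nu Q M : nat) (A : 'M[R]_nx) (B : 'M[R]_(nx, nu)) (om : 'I_M -> R).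
Variables (Xs : 'I_Q -> 'I_M -> 'cV[C]_nx) (Us : 'I_Q -> 'I_M -> 'cV[C]_nu).
Hypothesis sample_eq :
  forall i m, expj (om m) *: Xs i m = cmx A *m Xs i m + cmx B *m Us i m.

(* The samples together with their complex conjugates, matching the columns of
   [F_L] and [F_L^*]. *)
Definition freq_sample (z : C) x u := exists i m,
  (z, x, u) = (expj (om m), Xs i m, Us i m) \/
  (z, x, u) = ((expj (om m))^*%C, mxconj (Xs i m), mxconj (Us i m)).

Lemma freq_sample_state z x u :
  freq_sample z x u -> z *: x = cmx A *m x + cmx B *m u.
Proof.
move=> [i [m [[-> -> ->] | [-> -> ->]]]]; first exact: sample_eq.
have := congr1 (@mxconj _ _ _) (sample_eq i m).
by rewrite /mxconj map_mxZ map_mxD !map_mxM -!/(mxconj _) !mxconj_cmx.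
Qed.

Lemma CPE_exciting N : CPE N Us om -> exciting freq_sample N.
Proof.
move=> hcpe e he p hp.
pose v : 'rV[C]_(N * nu) := \row_r e (mxtens_unindex r).1 0 (mxtens_unindex r).2.
have blkv l : (l < N)%N -> tens_block v l = e l.
  move=> hl; have -> : l = Ordinal hl by [].
  by rewrite tens_blockE; apply/rowP => k; rewrite !mxE mxtens_indexK.
suff v0 : v = 0 by rewrite -blkv // v0 tens_block0.
have hfree : row_free (row_mx (FLblk N Us om) (mxconj (FLblk N Us om))).
  by rewrite /row_free hcpe mulnC.
apply: (row_free_inj hfree); rewrite /= mul0mx mul_mx_row -row_mx0 /FLblk.
rewrite [mxconj _]map_mxrow !mul_mxrow.
congr row_mx; apply/mxrowP => i; rewrite mxrowK submxrow0;
  apply/matrixP => a m; rewrite (ord1 a) [RHS]mxE.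
- rewrite mulmx_FL -[RHS](he (expj (om m)) (Xs i m) (Us i m)); last by exists i, m; left.
  by rewrite /wpair; apply: eq_big_nat => l /andP[_ hl]; rewrite blkv.
- rewrite -/(mxconj _) mulmx_mxconj_FL.
  rewrite -[RHS](he (expj (om m))^*%C (mxconj (Xs i m)) (mxconj (Us i m)));
    last by exists i, m; right.
  by rewrite /wpair; apply: eq_big_nat => l /andP[_ hl]; rewrite blkv.
Qed.

Definition stacked_FL L := col_mx (FLblk 1 Xs om) (FLblk L Us om).

Lemma stacked_kernel_annihilates L (w : 'rV[C]_(1 * nx + L * nu)) :
  w *m row_mx (stacked_FL L) (mxconj (stacked_FL L)) = 0 ->
  forall z x u, freq_sample z x u ->
    dot (tens_block (lsubmx w) 0) x + wpair L (tens_block (rsubmx w)) z u = 0.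
Proof.
rewrite -[w]hsubmxK mul_mx_row /stacked_FL /mxconj map_col_mx -!/(mxconj _).
rewrite !mul_row_col /FLblk ![mxconj _]map_mxrow !mul_mxrow -!mxrowD -row_mx0.
rewrite row_mxKl row_mxKr => /eq_row_mx [hX hU] z x u.
move=> [i [m [[-> -> ->] | [-> -> ->]]]].
  have /matrixP /(_ 0 m) := congr1 (fun M => submxrow M i) hX.
  rewrite mxrowK submxrow0 [RHS]mxE [LHS]mxE !mulmx_FL => <-.
  by rewrite /wpair big_nat1 expr0 mul1r.
have /matrixP /(_ 0 m) := congr1 (fun M => submxrow M i) hU.
rewrite mxrowK submxrow0 [RHS]mxE [LHS]mxE -!/(mxconj _) !mulmx_mxconj_FL => <-.
by rewrite /wpair big_nat1 expr0 mul1r.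
Qed.

Lemma stacked_FL_row_free L : controllable A B -> (1 <= L)%N ->
  CPE (L + nx) Us om -> row_free (row_mx (stacked_FL L) (mxconj (stacked_FL L))).
Proof.
move=> hctrb hL hcpe; apply: inj_row_free => w hw.
have hexc := CPE_exciting hcpe.
have hann := stacked_kernel_annihilates hw.
have eta0 := annihilator_input_eq0 freq_sample_state (@tens_block_out _ _ _ (rsubmx w))
  hann hexc (leqnn _).
have xi0 : tens_block (lsubmx w) 0 = 0.
  apply: (ctrb_left_kernel hctrb); apply: (annihilator_state_ctrb freq_sample_state hexc).
    by rewrite leq_add2r.
  move=> z x u hs; have := hann z x u hs.
  by rewrite /wpair big_nat_cond big1 ?addr0 // => p _; rewrite eta0 dot0l mulr0.
rewrite -[w]hsubmxK -row_mx0; congr row_mx; apply: tens_block_eq0 => //.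
by case=> [|l]; [exact: xi0 | rewrite tens_block_out].
Qed.

End FrequencySamples.

Theorem lemma2 (R : realType) (nx nu ny : nat)
  (A : 'M[R]_(nx, nx)) (B : 'M[R]_(nx, nu)) (Cm : 'M[R]_(ny, nx)) (D : 'M[R]_(ny, nu))
  (Q M L : nat) (om : 'I_M -> R)
  (U : 'I_Q -> R -> 'cV[R[i]]_nu) (X : 'I_Q -> R -> 'cV[R[i]]_nx)
  (Y : 'I_Q -> R -> 'cV[R[i]]_ny) :
  controllable A B ->
  (1 <= Q)%N -> (1 <= M)%N -> (1 <= L)%N ->
  (forall m, 0 <= om m /\ om m < pi) ->
  (forall i, isos_spectrum A B Cm D (U i) (X i) (Y i)) ->
  CPE (L + nx) (fun i m => U i (om m)) om ->
  let G := col_mx (FLblk 1 (fun i m => X i (om m)) om)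
                  (FLblk L (fun i m => U i (om m)) om) in
  \rank (row_mx G (mxconj G)) = (nx + L * nu)%N /\
  posdef (Remx (G *m ctrmx G)).
Proof.
move=> hctrb _ _ hL hom hsys hcpe G.
have sample_eq i m : expj (om m) *: X i (om m) =
    cmx A *m X i (om m) + cmx B *m U i (om m).
  have [hom0 hompi] := hom m; have [_ _ _ /(_ (om m)) []] := hsys i => //.
  by split=> //; apply: le_trans hom0; rewrite oppr_le0 pi_ge0.
have hfree : row_free (row_mx G (mxconj G)) := stacked_FL_row_free sample_eq hctrb hL hcpe.
split; first by rewrite (eqP hfree) mul1n.
exact: Remx_gram_posdef.
Qed.
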